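(* Let $(R,\mathfrak m)$ be a Noetherian local ring and let $T$ be an indeterminate. Then $\operatorname{gr}_{(\mathfrak m,T)}(R[T]) = \operatorname{gr}_{\mathfrak m}(R)[T]$. Moreover, via this identification, for any $T$-homogeneous ideal $I=\sum_{k\ge 0} I_k T^k$ of $R[T]$ (where each $I_k$ is an ideal of $R$), the initial ideal of $I$ with respect to $(\mathfrak m,T)$ is $\operatorname{in}_{(\mathfrak m,T)}(I)=\sum_{k\ge 0}\operatorname{in}_{\mathfrak m}(I_k)T^k$.
   Context: For a ring $A$ and ideals $J, I\subseteq A$, $\operatorname{gr}_J(A)=\bigoplus_{n\ge 0} J^n/J^{n+1}$ is the associated graded ring, and the initial (form) ideal of $I$ is $\operatorname{in}_J(I)=\bigoplus_{n\ge0} (I\cap J^n + J^{n+1})/J^{n+1}\subseteq \operatorname{gr}_J(A)$. *)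

From HB Require Import structures.
From mathcomp Require Import all_boot all_order all_algebra.
Set Implicit Arguments. Unset Strict Implicit. Unset Printing Implicit Defensive.
Import GRing.Theory.
Local Open Scope ring_scope.

Section IdealDefs.
Variable A : comNzRingType.

Definition is_ideal (I : A -> Prop) : Prop :=
  [/\ I 0, (forall x y, I x -> I y -> I (x + y)) & (forall r x, I x -> I (r * x))].

Definition gen_ideal (S : A -> Prop) (x : A) : Prop :=
  exists s : seq (A * A), (forall p, p \in s -> S p.2) /\ x = \sum_(p <- s) p.1 * p.2.

(* J^n : the ideal generated by all products of n elements of J (J^0 = A) *)
Definition ideal_pow (J : A -> Prop) (n : nat) : A -> Prop :=
  gen_ideal (fun x => exists t : n.-tuple A,
                        (forall y, y \in t -> J y) /\ x = \prod_(y <- t) y).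

Definition is_maximal_ideal (M : A -> Prop) : Prop :=
  [/\ is_ideal M, ~ M 1 &
      forall I, is_ideal I -> ~ I 1 -> (forall x, M x -> I x) -> forall x, I x -> M x].

Definition local_ring_with (m : A -> Prop) : Prop :=
  is_maximal_ideal m /\ forall M, is_maximal_ideal M -> forall x, M x <-> m x.

Definition noetherian : Prop :=
  forall I, is_ideal I -> exists s : seq A, forall x, I x <-> gen_ideal (fun y => y \in s) x.

(* Associated graded ring gr_J(A) = (+)_n J^n/J^{n+1}, described degreewise:
   an element of degree n is the class of some x in J^n ...                   *)
Definition gr_rep (J : A -> Prop) (n : nat) (x : A) : Prop := ideal_pow J n x.
(* ... and two representatives give the same class iff x - y in J^{n+1}.      *)
Definition gr_eq (J : A -> Prop) (n : nat) (x y : A) : Prop := ideal_pow J n.+1 (x - y).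

(* The degree-n component of in_J(I) = (+)_n (I cap J^n + J^{n+1})/J^{n+1}:
   the class of x in J^n lies in in_J(I)_n iff x in I cap J^n + J^{n+1}.       *)
Definition initial_deg (J : A -> Prop) (I : A -> Prop) (n : nat) (x : A) : Prop :=
  exists y z, [/\ I y, ideal_pow J n y, ideal_pow J n.+1 z & x = y + z].

End IdealDefs.

Definition mT_ideal (R : comNzRingType) (m : R -> Prop) : {poly R} -> Prop :=
  gen_ideal (fun p : {poly R} => (exists a, m a /\ p = a%:P) \/ p = 'X).

From HB Require Import structures.
From mathcomp Require Import all_boot all_order all_algebra.
From mathcomp Require Import zify.
Import GRing.Theory.
Local Open Scope ring_scope.
Set Implicit Arguments. Unset Strict Implicit.

(* The (m,T)-adic filtration of R[T] is the coefficientwise filtration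
   F_n = sum_k m^(n-k) T^k.  Indeed F is multiplicative and F_1 contains the
   generators of (m,T), so (m,T)^n lies in F_n; conversely a T^k with a in
   m^(n-k) is the product of a in (m,T)^(n-k) and T^k in (m,T)^k.  Both
   graded statements are then read off coefficientwise.  For the initial
   ideal, I cap F_n + F_(n+1) is an ideal, so it suffices to treat the
   monomials a T^k, and for those T-homogeneity of I reduces membership in I
   to membership of a in I_k. *)

Section IdealPow.
Variable A : comNzRingType.
Implicit Types (S J I : A -> Prop) (F : nat -> A -> Prop).

Lemma gen_ideal_is_ideal S : is_ideal (gen_ideal S).
Proof.
split.
- by exists [::]; rewrite big_nil.
- move=> _ _ [s [sS ->]] [t [tS ->]]; exists (s ++ t); rewrite big_cat.
  by split=> // p; rewrite mem_cat => /orP[]; [apply: sS | apply: tS].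
- move=> r _ [s [sS ->]]; exists [seq (r * p.1, p.2) | p <- s]; split.
  + by move=> q /mapP[p sp ->]; exact: sS p sp.
  + by rewrite big_map mulr_sumr; apply: eq_bigr => p _; rewrite mulrA.
Qed.

Lemma gen_ideal_sub S x : S x -> gen_ideal S x.
Proof.
move=> Sx; exists [:: (1, x)]; rewrite big_seq1 mul1r.
by split=> // p; rewrite inE => /eqP->.
Qed.

Lemma gen_ideal_min S I :
  is_ideal I -> (forall x, S x -> I x) -> forall x, gen_ideal S x -> I x.
Proof.
move=> [I0 ID IM] SI _ [s [sS ->]]; rewrite big_seq.
by apply: (big_ind I) => // p /sS/SI; apply: IM.
Qed.

Lemma ideal_sum I (T : Type) (r : seq T) (F : T -> A) :
  is_ideal I -> (forall i, I (F i)) -> I (\sum_(i <- r) F i).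
Proof. by move=> [I0 ID _] IF; apply: (big_ind I). Qed.

Lemma ideal_pow_is_ideal J n : is_ideal (ideal_pow J n).
Proof. exact: gen_ideal_is_ideal. Qed.

Lemma ideal_pow0 J x : ideal_pow J 0 x.
Proof.
have [_ _ IM] := ideal_pow_is_ideal J 0; rewrite -[x]mulr1; apply/IM/gen_ideal_sub.
by exists [tuple]; rewrite big_nil.
Qed.

Lemma ideal_pow_zero J n : ideal_pow J n 0.
Proof. by case: (ideal_pow_is_ideal J n). Qed.

Lemma ideal_pow1 J x : J x -> ideal_pow J 1 x.
Proof.
move=> Jx; apply: gen_ideal_sub; exists [tuple x]; rewrite big_seq1.
by split=> // y; rewrite inE => /eqP->.
Qed.

Lemma ideal_powD J a b x y :
  ideal_pow J a x -> ideal_pow J b y -> ideal_pow J (a + b) (x * y).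
Proof.
have [I0 ID IM] := ideal_pow_is_ideal J (a + b).
have idealMl z : is_ideal (fun u => ideal_pow J (a + b) (z * u)).
  split; [by rewrite mulr0 | by move=> u v *; rewrite mulrDr; apply: ID |].
  by move=> r u *; rewrite mulrCA; apply: IM.
have idealMr z : is_ideal (fun u => ideal_pow J (a + b) (u * z)).
  split; [by rewrite mul0r | by move=> u v *; rewrite mulrDl; apply: ID |].
  by move=> r u *; rewrite -mulrA; apply: IM.
move=> Jx; move: y; apply: gen_ideal_min => // _ [u [uJ ->]].
move: x Jx; apply: gen_ideal_min => // _ [t [tJ ->]].
apply: gen_ideal_sub; exists [tuple of t ++ u]; rewrite big_cat; split=> //.
by move=> z; rewrite mem_cat => /orP[]; [apply: tJ | apply: uJ].
Qed.

Lemma ideal_pow_subn_le J a b x : (a <= b)%N -> ideal_pow J (a - b) x.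
Proof. by rewrite -subn_eq0 => /eqP->; apply: ideal_pow0. Qed.

Lemma ideal_powS J a x : ideal_pow J a.+1 x -> ideal_pow J a x.
Proof.
apply: gen_ideal_min; first exact: ideal_pow_is_ideal.
move=> _ [t [tJ ->]]; rewrite (tuple_eta t) big_cons.
have [_ _ IM] := ideal_pow_is_ideal J a; apply/IM/gen_ideal_sub.
exists (behead_tuple t); split=> // z zt.
by apply: tJ; rewrite (tuple_eta t) inE zt orbT.
Qed.

Lemma ideal_pow_le J a b x : (b <= a)%N -> ideal_pow J a x -> ideal_pow J b x.
Proof.
move/subnKC <-; elim: (a - b)%N => [|d IHd]; first by rewrite addn0.
by rewrite addnS => /ideal_powS.
Qed.

Lemma ideal_pow_sub_filtration J F :
  (forall n, is_ideal (F n)) -> F 0%N 1 ->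
  (forall a b x y, F a x -> F b y -> F (a + b)%N (x * y)) ->
  (forall x, J x -> F 1%N x) ->
  forall n x, ideal_pow J n x -> F n x.
Proof.
move=> Fideal F01 FM JF n; apply: gen_ideal_min => // _ [t [tJ ->]].
have Fprod s : (forall y, y \in s -> J y) -> F (size s) (\prod_(y <- s) y).
  elim: s => [|x s IHs] sJ; first by rewrite big_nil.
  rewrite big_cons /= -add1n; apply: FM; first by apply: JF; apply/sJ/mem_head.
  by apply: IHs => y sy; apply: sJ; rewrite inE sy orbT.
by have := Fprod t tJ; rewrite size_tuple.
Qed.

Lemma initial_deg_is_ideal J I n : is_ideal I -> is_ideal (initial_deg J I n).
Proof.
have [P0 PD PM] := ideal_pow_is_ideal J n.
have [Q0 QD QM] := ideal_pow_is_ideal J n.+1.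
move=> [I0 ID IM]; split.
- by exists 0, 0; rewrite addr0.
- move=> _ _ [y [z [Iy Py Qz ->]]] [y' [z' [Iy' Py' Qz' ->]]].
  exists (y + y'), (z + z'); split; [exact: ID | exact: PD | exact: QD |].
  by rewrite addrACA.
- move=> r _ [y [z [Iy Py Qz ->]]]; exists (r * y), (r * z).
  by split; [exact: IM | exact: PM | exact: QM | rewrite mulrDr].
Qed.

End IdealPow.

Lemma ideal_pow_rmorph (A B : comNzRingType) (phi : {rmorphism A -> B})
    (J : A -> Prop) (J' : B -> Prop) n x :
  (forall a, J a -> J' (phi a)) -> ideal_pow J n x -> ideal_pow J' n (phi x).
Proof.
have [_ ID IM] := ideal_pow_is_ideal J' n.
have preim_ideal : is_ideal (fun u => ideal_pow J' n (phi u)).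
  split; first by rewrite rmorph0; apply: ideal_pow_zero.
    by move=> u v *; rewrite rmorphD; apply: ID.
  by move=> r u *; rewrite rmorphM; apply: IM.
move=> JJ'; move: x; apply: gen_ideal_min => // _ [t [tJ ->]].
apply: gen_ideal_sub; exists (map_tuple phi t).
by rewrite rmorph_prod big_map; split=> // _ /mapP[y ty ->]; apply/JJ'/tJ.
Qed.

Section AdicFiltration.
Variables (R : comNzRingType) (m : R -> Prop).

Definition coef_filtration n (f : {poly R}) := forall k, ideal_pow m (n - k) f`_k.

Lemma coef_filtration0 f : coef_filtration 0 f.
Proof. by move=> k; apply: ideal_pow0. Qed.

Lemma coef_filtrationM a b f g :
  coef_filtration a f -> coef_filtration b g -> coef_filtration (a + b) (f * g).
Proof.
move=> Ff Fg k; rewrite coefM; apply: ideal_sum => [|i].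
  exact: ideal_pow_is_ideal.
apply: (@ideal_pow_le _ _ ((a - i) + (b - (k - i)))%N); last exact: ideal_powD.
by have := ltn_ord i; lia.
Qed.

Lemma coef_filtration_is_ideal n : is_ideal (coef_filtration n).
Proof.
split.
- by move=> k; rewrite coef0; apply: ideal_pow_zero.
- move=> f g Ff Fg k; rewrite coefD.
  by case: (ideal_pow_is_ideal m (n - k)) => _ ID _; apply: ID.
- move=> r f Ff; rewrite -[n]add0n.
  by apply: coef_filtrationM => //; apply: coef_filtration0.
Qed.

Lemma coef_filtrationZXn n k (a : R) :
  coef_filtration n (a *: 'X^k) <-> ideal_pow m (n - k) a.
Proof.
split=> [/(_ k)|ma j]; first by rewrite coefZ coefXn eqxx mulr1.
rewrite coefZ coefXn; case: eqP => [->|_]; first by rewrite mulr1.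
by rewrite mulr0; apply: ideal_pow_zero.
Qed.

Lemma mT_ideal_pow_Xn k : ideal_pow (mT_ideal m) k 'X^k.
Proof.
elim: k => [|k IHk]; first exact: ideal_pow0.
by rewrite exprS -add1n; apply: ideal_powD => //; apply/ideal_pow1/gen_ideal_sub; right.
Qed.

Lemma mT_ideal_coef_filtration1 f : mT_ideal m f -> coef_filtration 1 f.
Proof.
apply: gen_ideal_min; first exact: coef_filtration_is_ideal.
move=> p [[a [ma ->]]|->] k.
- by rewrite coefC; case: eqP => [->|_]; [apply: ideal_pow1 | apply: ideal_pow_zero].
- by rewrite coefX; case: eqP => [->|_]; [apply: ideal_pow0 | apply: ideal_pow_zero].
Qed.

Lemma mT_ideal_powE n f : ideal_pow (mT_ideal m) n f <-> coef_filtration n f.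
Proof.
split=> [|Ff].
  apply: ideal_pow_sub_filtration; [exact: coef_filtration_is_ideal |
    exact: coef_filtration0 | exact: coef_filtrationM | exact: mT_ideal_coef_filtration1].
 rewrite -[f]coefK poly_def; apply: ideal_sum => [|i].
  exact: ideal_pow_is_ideal.
rewrite -mul_polyC; apply: (@ideal_pow_le _ _ ((n - i) + i)%N); first lia.
apply: ideal_powD; last exact: mT_ideal_pow_Xn.
by apply: ideal_pow_rmorph (Ff i) => a ma; apply: gen_ideal_sub; left; exists a.
Qed.

Lemma mT_gr_eqE n f g :
  gr_eq (mT_ideal m) n f g <-> (forall k, (k <= n)%N -> gr_eq m (n - k) f`_k g`_k).
Proof.
rewrite /gr_eq mT_ideal_powE; split=> [Ffg k kn | mfg k].
  by have := Ffg k; rewrite coefB subSn.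
rewrite coefB; case: (leqP k n) => [kn | nk]; last exact: ideal_pow_subn_le.
by rewrite subSn //; apply: mfg.
Qed.

End AdicFiltration.

Section HomogeneousInitial.
Variables (R : comNzRingType) (m : R -> Prop).
Variables (I : {poly R} -> Prop) (Ik : nat -> R -> Prop).
Hypothesis I_ideal : is_ideal I.
Hypothesis Ik_ideal : forall k, is_ideal (Ik k).
Hypothesis I_homogeneous : forall f, I f <-> (forall k, Ik k f`_k).

Lemma homogeneous_memZXn k (a : R) : Ik k a -> I (a *: 'X^k).
Proof.
move=> Ika; apply/I_homogeneous => j; rewrite coefZ coefXn.
case: eqP => [->|_]; first by rewrite mulr1.
by rewrite mulr0; case: (Ik_ideal j).
Qed.

Lemma initial_deg_homogeneous_coef n (f : {poly R}) k :
  initial_deg (mT_ideal m) I n f -> (k <= n)%N ->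
  initial_deg m (Ik k) (n - k) f`_k.
Proof.
move=> [y [z [/I_homogeneous Iy /mT_ideal_powE my /mT_ideal_powE mz ->]]] kn.
exists y`_k, z`_k; split; [exact: Iy | exact: my | | by rewrite coefD].
by have := mz k; rewrite subSn.
Qed.

Lemma initial_deg_homogeneousZXn n k (a : R) :
  initial_deg m (Ik k) (n - k) a -> (k <= n)%N ->
  initial_deg (mT_ideal m) I n (a *: 'X^k).
Proof.
move=> [y [z [Iky my mz ->]]] kn; exists (y *: 'X^k), (z *: 'X^k); split.
- exact: homogeneous_memZXn.
- exact/mT_ideal_powE/coef_filtrationZXn.
- by apply/mT_ideal_powE/coef_filtrationZXn; rewrite subSn.
- by rewrite scalerDl.
Qed.

Lemma initial_deg_homogeneous_sum n (f : {poly R}) :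
  (forall k, (k <= n)%N -> initial_deg m (Ik k) (n - k) f`_k) ->
  initial_deg (mT_ideal m) I n f.
Proof.
move=> inf; rewrite -[f]coefK poly_def; apply: ideal_sum => [|i].
  exact: initial_deg_is_ideal.
case: (leqP i n) => [iN | ni]; first exact: initial_deg_homogeneousZXn (inf i iN) iN.
have [I0 _ _] := I_ideal; exists 0, (f`_i *: 'X^i); rewrite add0r.
split=> //; first exact: ideal_pow_zero.
exact/mT_ideal_powE/coef_filtrationZXn/ideal_pow_subn_le.
Qed.

End HomogeneousInitial.

Theorem lemma2p4 (R : comNzRingType) (m : R -> Prop) :
  noetherian R -> local_ring_with m ->
  (* gr_{(m,T)}(R[T]) = gr_m(R)[T]: the class of f in degree n corresponds to
     sum_k [f_k]_{n-k} T^k; well-definedness, injectivity and surjectivity: *)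
  (forall (n : nat) (f : {poly R}),
      gr_rep (mT_ideal m) n f <-> (forall k : nat, gr_rep m (n - k) f`_k)) /\
  (forall (n : nat) (f g : {poly R}),
      gr_rep (mT_ideal m) n f -> gr_rep (mT_ideal m) n g ->
      (gr_eq (mT_ideal m) n f g <->
         (forall k : nat, (k <= n)%N -> gr_eq m (n - k) f`_k g`_k))) /\
  (* in_{(m,T)}(I) = sum_k in_m(I_k) T^k for T-homogeneous I = sum_k I_k T^k *)
  (forall (I : {poly R} -> Prop) (Ik : nat -> R -> Prop),
      is_ideal I -> (forall k, is_ideal (Ik k)) ->
      (forall f : {poly R}, I f <-> (forall k : nat, Ik k f`_k)) ->
      forall (n : nat) (f : {poly R}), gr_rep (mT_ideal m) n f ->
        (initial_deg (mT_ideal m) I n f <->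
           (forall k : nat, (k <= n)%N -> initial_deg m (Ik k) (n - k) f`_k))).
Proof.
move=> _ _; split; [exact: mT_ideal_powE | split].
  by move=> n f g _ _; apply: mT_gr_eqE.
move=> I Ik I_ideal Ik_ideal I_homog n f _; split.
  by move=> inf k; apply: initial_deg_homogeneous_coef.
exact: initial_deg_homogeneous_sum.
Qed.
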